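(* Let $F:\mathcal C\to\mathcal D$ be a pseudofunctor of bicategories. Then every extended formal diagram for $F$ commutes. Equivalently, for every map of graphs $H:G\to M$, every hom-category of the bicategory $\mathcal M(H)$ is thin.
   Context: Let $\mathbf{Pseudo}_1$ be the category of pseudofunctors $F:\mathcal C\to\mathcal D$ of bicategories with morphisms pairs of strict functors forming strictly commuting squares. The functor from $\mathbf{Pseudo}_1$ to the arrow category of directed graphs sending $F$ to the graph map $UF:U\mathcal C\to U\mathcal D$ (where $U$ takes 0-cells and 1-cells) has a left adjoint, sending a graph map $H:G\to M$ to a pseudofunctor $\Phi_H:\mathcal F(G)\to\mathcal M(H)$, where $\mathcal F(G)$ is the free bicategory on $G$. Its universal property: for every pseudofunctor $F:\mathcal C\to\mathcal D$ and every strictly commuting square of graph maps $g:G\to U\mathcal C$, $h:M\to U\mathcal D$ with $UF\circ g=h\circ H$, there are unique strict functors $\mathcal F(G)\to\mathcal C$ and $\mathcal M(H)\to\mathcal D$ extending $g$ and $h$ such that the resulting square with $\Phi_H$ and $F$ commutes strictly. (Concretely, 1-cells of $\mathcal M(H)$ are parenthesized composable words in formal units, edges of $M$, and terms $\Phi_H(w)$ with $w$ a 1-cell of $\mathcal F(G)$, where a term $\Phi_H(X)$ for a single edge $X$ of $G$ is identified with the edge $H(X)$ of $M$.) An extended formal diagram for $F$ is a diagram in $\mathcal D$ which is the image of a diagram in $\mathcal M(H)$ under the strict functor $\mathcal M(H)\to\mathcal D$ arising from some such square. *)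

Set Implicit Arguments.

Record graph := Graph {
  V : Type;
  E : Type;
  src : E -> V;
  tgt : E -> V }.

Record gmap (G M : graph) := GMap {
  hV : V G -> V M;
  hE : E G -> E M;
  hsrc : forall e, src M (hE e) = hV (src G e);
  htgt : forall e, tgt M (hE e) = hV (tgt G e) }.

(* (0-cells O, generating 1-cells X, generating 2-cells Y)             *)
Inductive word (O X : Type) : Type :=
| wid (a : O)
| wgen (x : X)
| wcomp (g f : word O X).          (* g after f *)

Inductive cell (O X Y : Type) : Type :=
| cid (w : word O X)
| cv (b a : cell O X Y)            (* vertical: b after a *)
| ch (b a : cell O X Y)            (* horizontal: b * a, b on the left *)
| ca (h g f : word O X)            (* (h g) f => h (g f) *)
| cai (h g f : word O X)
| cl (f : word O X)                (* id . f => f *)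
| cli (f : word O X)
| cr (f : word O X)                (* f . id => f *)
| cri (f : word O X)
| cgen (y : Y).

Arguments wid {O X}.
Arguments wgen {O X}.
Arguments wcomp {O X}.
Arguments cid {O X Y}.
Arguments cv {O X Y}.
Arguments ch {O X Y}.
Arguments ca {O X Y}.
Arguments cai {O X Y}.
Arguments cl {O X Y}.
Arguments cli {O X Y}.
Arguments cr {O X Y}.
Arguments cri {O X Y}.
Arguments cgen {O X Y}.

Section FreeBicat.
Variables (O X Y : Type).
Variable xty : X -> O -> O -> Prop.
Variable yty : Y -> O -> O -> word O X -> word O X -> Prop.
Variable rel : O -> O -> word O X -> word O X -> cell O X Y -> cell O X Y -> Prop.

Local Notation W := (word O X).
Local Notation C := (cell O X Y).

(* typing of 1-cells: wty w a b  means  w : a -> b *)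
Inductive wty : W -> O -> O -> Prop :=
| wty_id a : wty (wid a) a a
| wty_gen x a b : xty x a b -> wty (wgen x) a b
| wty_comp g f a b c : wty f a b -> wty g b c -> wty (wcomp g f) a c.

(* typing of 2-cells: cty a b al u v  means  al : u => v  in hom(a,b) *)
Inductive cty : O -> O -> C -> W -> W -> Prop :=
| cty_id a b w : wty w a b -> cty a b (cid w) w w
| cty_v a b al be u v w :
    cty a b al u v -> cty a b be v w -> cty a b (cv be al) u w
| cty_h a b c al be f f' g g' :
    cty a b al f f' -> cty b c be g g' ->
    cty a c (ch be al) (wcomp g f) (wcomp g' f')
| cty_a a b c d h g f : wty f a b -> wty g b c -> wty h c d ->
    cty a d (ca h g f) (wcomp (wcomp h g) f) (wcomp h (wcomp g f))
| cty_ai a b c d h g f : wty f a b -> wty g b c -> wty h c d ->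
    cty a d (cai h g f) (wcomp h (wcomp g f)) (wcomp (wcomp h g) f)
| cty_l a b f : wty f a b -> cty a b (cl f) (wcomp (wid b) f) f
| cty_li a b f : wty f a b -> cty a b (cli f) f (wcomp (wid b) f)
| cty_r a b f : wty f a b -> cty a b (cr f) (wcomp f (wid a)) f
| cty_ri a b f : wty f a b -> cty a b (cri f) f (wcomp f (wid a))
| cty_gen a b y s t : yty y a b s t -> cty a b (cgen y) s t.

Inductive ceq : O -> O -> W -> W -> C -> C -> Prop :=
| ceq_refl a b u v al : cty a b al u v -> ceq a b u v al al
| ceq_sym a b u v al be : ceq a b u v al be -> ceq a b u v be al
| ceq_trans a b u v al be ga :
    ceq a b u v al be -> ceq a b u v be ga -> ceq a b u v al ga
| ceq_v a b u v w al al' be be' :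
    ceq a b u v al al' -> ceq a b v w be be' ->
    ceq a b u w (cv be al) (cv be' al')
| ceq_h a b c f f' g g' al al' be be' :
    ceq a b f f' al al' -> ceq b c g g' be be' ->
    ceq a c (wcomp g f) (wcomp g' f') (ch be al) (ch be' al')
| ceq_idl a b u v al : cty a b al u v -> ceq a b u v (cv (cid v) al) al
| ceq_idr a b u v al : cty a b al u v -> ceq a b u v (cv al (cid u)) al
| ceq_vassoc a b u v w x al be ga :
    cty a b al u v -> cty a b be v w -> cty a b ga w x ->
    ceq a b u x (cv ga (cv be al)) (cv (cv ga be) al)
| ceq_hid a b c f g : wty f a b -> wty g b c ->
    ceq a c (wcomp g f) (wcomp g f) (ch (cid g) (cid f)) (cid (wcomp g f))
| ceq_interchange a b c f f' f'' g g' g'' al al' be be' :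
    cty a b al f f' -> cty a b al' f' f'' ->
    cty b c be g g' -> cty b c be' g' g'' ->
    ceq a c (wcomp g f) (wcomp g'' f'')
        (ch (cv be' be) (cv al' al)) (cv (ch be' al') (ch be al))
| ceq_a_nat a b c d f f' g g' h h' al be ga :
    cty a b al f f' -> cty b c be g g' -> cty c d ga h h' ->
    ceq a d (wcomp (wcomp h g) f) (wcomp h' (wcomp g' f'))
        (cv (ca h' g' f') (ch (ch ga be) al))
        (cv (ch ga (ch be al)) (ca h g f))
| ceq_l_nat a b f f' al : cty a b al f f' ->
    ceq a b (wcomp (wid b) f) f'
        (cv (cl f') (ch (cid (wid b)) al)) (cv al (cl f))
| ceq_r_nat a b f f' al : cty a b al f f' ->
    ceq a b (wcomp f (wid a)) f'
        (cv (cr f') (ch al (cid (wid a)))) (cv al (cr f))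
| ceq_a_inv1 a b c d h g f : wty f a b -> wty g b c -> wty h c d ->
    ceq a d (wcomp (wcomp h g) f) (wcomp (wcomp h g) f)
        (cv (cai h g f) (ca h g f)) (cid (wcomp (wcomp h g) f))
| ceq_a_inv2 a b c d h g f : wty f a b -> wty g b c -> wty h c d ->
    ceq a d (wcomp h (wcomp g f)) (wcomp h (wcomp g f))
        (cv (ca h g f) (cai h g f)) (cid (wcomp h (wcomp g f)))
| ceq_l_inv1 a b f : wty f a b ->
    ceq a b (wcomp (wid b) f) (wcomp (wid b) f)
        (cv (cli f) (cl f)) (cid (wcomp (wid b) f))
| ceq_l_inv2 a b f : wty f a b ->
    ceq a b f f (cv (cl f) (cli f)) (cid f)
| ceq_r_inv1 a b f : wty f a b ->
    ceq a b (wcomp f (wid a)) (wcomp f (wid a))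
        (cv (cri f) (cr f)) (cid (wcomp f (wid a)))
| ceq_r_inv2 a b f : wty f a b ->
    ceq a b f f (cv (cr f) (cri f)) (cid f)
| ceq_pentagon a b c d e f g h k :
    wty f a b -> wty g b c -> wty h c d -> wty k d e ->
    ceq a e (wcomp (wcomp (wcomp k h) g) f) (wcomp k (wcomp h (wcomp g f)))
        (cv (ca k h (wcomp g f)) (ca (wcomp k h) g f))
        (cv (ch (cid k) (ca h g f))
            (cv (ca k (wcomp h g) f) (ch (ca k h g) (cid f))))
| ceq_triangle a b c f g : wty f a b -> wty g b c ->
    ceq a c (wcomp (wcomp g (wid b)) f) (wcomp g f)
        (cv (ch (cid g) (cl f)) (ca g (wid b) f))
        (ch (cr g) (cid f))
| ceq_rel a b u v al be :
    rel a b u v al be -> cty a b al u v -> cty a b be u v ->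
    ceq a b u v al be.

End FreeBicat.

Arguments wty {O X}.
Arguments cty {O X Y}.
Arguments ceq {O X Y}.

Section FreeOnGraph.
Variable G : graph.

Definition FW := word (V G) (E G).
Definition FC := cell (V G) (E G) Empty_set.

Inductive Fxty : E G -> V G -> V G -> Prop :=
| Fxty_e e : Fxty e (src G e) (tgt G e).

Definition Fyty (y : Empty_set) (a b : V G) (s t : FW) : Prop := False.
Definition Frel (a b : V G) (s t : FW) (al be : FC) : Prop := False.

Definition fwty : FW -> V G -> V G -> Prop := wty Fxty.
Definition fcty : V G -> V G -> FC -> FW -> FW -> Prop := cty Fxty Fyty.
Definition fceq : V G -> V G -> FW -> FW -> FC -> FC -> Prop :=
  ceq Fxty Fyty Frel.
End FreeOnGraph.

(* The bicategory M(H) (codomain of the free pseudofunctor Phi_H)      *)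
Section MH.
Variables (G M : graph) (H : gmap G M).

(* generating 1-cells: edges of M, and Phi(w) for w a 1-cell of F(G)
   which is not a single edge (Phi(X) is identified with H(X)) *)
Inductive gen1 : Type :=
| GE (e : E M)
| GPhi (w : FW G).

(* generating 2-cells: Phi(alpha), the composition constraints
   phi_{g,f} : Phi g . Phi f => Phi (g . f), the unit constraints
   phi_a : id_{H a} => Phi (id_a), and their inverses *)
Inductive gen2 : Type :=
| YPhi (al : FC G)
| YC (g f : FW G)
| YCi (g f : FW G)
| YU (a : V G)
| YUi (a : V G).

Definition MW := word (V M) gen1.
Definition MC := cell (V M) gen1 gen2.

Definition phi1 (w : FW G) : gen1 :=
  match w with
  | wgen x => GE (hE H x)
  | _ => GPhi w
  end.
Definition Pw (w : FW G) : MW := wgen (phi1 w).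

Inductive Mxty : gen1 -> V M -> V M -> Prop :=
| Mxty_E e : Mxty (GE e) (src M e) (tgt M e)
| Mxty_Phi w a b : fwty w a b -> (forall x, w <> wgen x) ->
    Mxty (GPhi w) (hV H a) (hV H b).

Inductive Myty : gen2 -> V M -> V M -> MW -> MW -> Prop :=
| Myty_Phi a b al s t : fcty a b al s t ->
    Myty (YPhi al) (hV H a) (hV H b) (Pw s) (Pw t)
| Myty_C a b c g f : fwty f a b -> fwty g b c ->
    Myty (YC g f) (hV H a) (hV H c) (wcomp (Pw g) (Pw f)) (Pw (wcomp g f))
| Myty_Ci a b c g f : fwty f a b -> fwty g b c ->
    Myty (YCi g f) (hV H a) (hV H c) (Pw (wcomp g f)) (wcomp (Pw g) (Pw f))
| Myty_U a : Myty (YU a) (hV H a) (hV H a) (wid (hV H a)) (Pw (wid a))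
| Myty_Ui a : Myty (YUi a) (hV H a) (hV H a) (Pw (wid a)) (wid (hV H a)).

Local Notation Phi al := (@cgen (V M) gen1 gen2 (YPhi al)).
Local Notation phiC g f := (@cgen (V M) gen1 gen2 (YC g f)).
Local Notation phiCi g f := (@cgen (V M) gen1 gen2 (YCi g f)).
Local Notation phiU a := (@cgen (V M) gen1 gen2 (YU a)).
Local Notation phiUi a := (@cgen (V M) gen1 gen2 (YUi a)).

(* the pseudofunctor axioms for Phi *)
Inductive Mrel : V M -> V M -> MW -> MW -> MC -> MC -> Prop :=
| R_resp a b s t al be : fceq a b s t al be ->
    Mrel (hV H a) (hV H b) (Pw s) (Pw t) (Phi al) (Phi be)
| R_id a b w : fwty w a b ->
    Mrel (hV H a) (hV H b) (Pw w) (Pw w) (Phi (cid w)) (cid (Pw w))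
| R_v a b u v w al be : fcty a b al u v -> fcty a b be v w ->
    Mrel (hV H a) (hV H b) (Pw u) (Pw w) (Phi (cv be al)) (cv (Phi be) (Phi al))
| R_nat a b c f f' g g' al be : fcty a b al f f' -> fcty b c be g g' ->
    Mrel (hV H a) (hV H c) (wcomp (Pw g) (Pw f)) (Pw (wcomp g' f'))
      (cv (phiC g' f') (ch (Phi be) (Phi al)))
      (cv (Phi (ch be al)) (phiC g f))
| R_C_inv1 a b c g f : fwty f a b -> fwty g b c ->
    Mrel (hV H a) (hV H c) (wcomp (Pw g) (Pw f)) (wcomp (Pw g) (Pw f))
      (cv (phiCi g f) (phiC g f)) (cid (wcomp (Pw g) (Pw f)))
| R_C_inv2 a b c g f : fwty f a b -> fwty g b c ->
    Mrel (hV H a) (hV H c) (Pw (wcomp g f)) (Pw (wcomp g f))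
      (cv (phiC g f) (phiCi g f)) (cid (Pw (wcomp g f)))
| R_U_inv1 a :
    Mrel (hV H a) (hV H a) (wid (hV H a)) (wid (hV H a))
      (cv (phiUi a) (phiU a)) (cid (wid (hV H a)))
| R_U_inv2 a :
    Mrel (hV H a) (hV H a) (Pw (wid a)) (Pw (wid a))
      (cv (phiU a) (phiUi a)) (cid (Pw (wid a)))
| R_assoc a b c d h g f : fwty f a b -> fwty g b c -> fwty h c d ->
    Mrel (hV H a) (hV H d) (wcomp (wcomp (Pw h) (Pw g)) (Pw f))
      (Pw (wcomp h (wcomp g f)))
      (cv (Phi (ca h g f)) (cv (phiC (wcomp h g) f) (ch (phiC h g) (cid (Pw f)))))
      (cv (phiC h (wcomp g f)) (cv (ch (cid (Pw h)) (phiC g f)) (ca (Pw h) (Pw g) (Pw f))))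
| R_lunit a b f : fwty f a b ->
    Mrel (hV H a) (hV H b) (wcomp (wid (hV H b)) (Pw f)) (Pw f)
      (cv (Phi (cl f)) (cv (phiC (wid b) f) (ch (phiU b) (cid (Pw f)))))
      (cl (Pw f))
| R_runit a b f : fwty f a b ->
    Mrel (hV H a) (hV H b) (wcomp (Pw f) (wid (hV H a))) (Pw f)
      (cv (Phi (cr f)) (cv (phiC f (wid a)) (ch (cid (Pw f)) (phiU a))))
      (cr (Pw f)).

Definition Mcty : V M -> V M -> MC -> MW -> MW -> Prop := cty Mxty Myty.
Definition Mceq : V M -> V M -> MW -> MW -> MC -> MC -> Prop :=
  ceq Mxty Myty Mrel.

Definition Mhom_thin (x y : V M) : Prop :=
  forall (u v : MW) (al be : MC),
    Mcty x y al u v -> Mcty x y be u v -> Mceq x y u v al be.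
End MH.

(* A 1-cell u of M(H) traverses a path [edges u] of M;
   Phi(w) traverses the H-image of the path of w.  For every 1-cell N we build
   a normalization 2-cell  norm u N : u . N => [edges u] . N  (the path composed
   right-bracketed in front of N) out of associators, left unitors and the
   inverse structure cells of Phi.  A 2-cell al : u => v is *coherent* when u and
   v traverse the same path and  norm v N o (al |> N) = norm u N  for all N.
   Coherence is closed under composition, inverses and "two out of three"; the
   structure cells of M(H) are coherent by the bicategory axioms (pentagon,
   triangle, Kelly's lemma), and Phi(al) is coherent by a second induction over
   F(G) that uses the pseudofunctor axioms.  As every 2-cell is invertible, two
   parallel 2-cells al, be satisfy al |> id = be |> id, hence al = be. *)

From Stdlib Require Import List.
Import ListNotations.
Set Implicit Arguments.

Ltac ty_rule := match goal with
 | |- wty _ (wid _) _ _ => eapply wty_id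
 | |- wty _ (wcomp _ _) _ _ => eapply wty_comp
 | |- cty _ _ _ _ (cid _) _ _ => eapply cty_id
 | |- cty _ _ _ _ (cv _ _) _ _ => eapply cty_v
 | |- cty _ _ _ _ (ch _ _) _ _ => eapply cty_h
 | |- cty _ _ _ _ (ca _ _ _) _ _ => eapply cty_a
 | |- cty _ _ _ _ (cai _ _ _) _ _ => eapply cty_ai
 | |- cty _ _ _ _ (cl _) _ _ => eapply cty_l
 | |- cty _ _ _ _ (cli _) _ _ => eapply cty_li
 | |- cty _ _ _ _ (cr _) _ _ => eapply cty_r
 | |- cty _ _ _ _ (cri _) _ _ => eapply cty_ri
 end.

Section Boundaries.
Variables (O X Y : Type).
Variable xty : X -> O -> O -> Prop.
Variable yty : Y -> O -> O -> word O X -> word O X -> Prop.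
Variable rel : O -> O -> word O X -> word O X -> cell O X Y -> cell O X Y -> Prop.
Hypothesis gen2_typed :
  forall y a b s t, yty y a b s t -> wty xty s a b /\ wty xty t a b.

Local Notation WT := (wty xty).
Local Notation T := (cty xty yty).
Local Notation EQ := (ceq xty yty rel).

Lemma cell_boundary_typed a b al u v : T a b al u v -> WT u a b /\ WT v a b.
Proof.
  induction 1; repeat match goal with h : _ /\ _ |- _ => destruct h end;
    [.. | now apply gen2_typed with y];
    repeat split; eauto using wty.
Qed.

Lemma cell_src_typed a b al u v : T a b al u v -> WT u a b.
Proof. intro h; apply (cell_boundary_typed h). Qed.
Lemma cell_tgt_typed a b al u v : T a b al u v -> WT v a b.
Proof. intro h; apply (cell_boundary_typed h). Qed.

Lemma ceq_sides_typed a b u v al be : EQ a b u v al be -> T a b al u v /\ T a b be u v.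
Proof.
  induction 1; repeat match goal with h : _ /\ _ |- _ => destruct h end;
    split;
    repeat first [ eassumption | ty_rule
                 | eapply cell_src_typed; eassumption
                 | eapply cell_tgt_typed; eassumption ].
Qed.

Lemma ceq_lhs_typed a b u v al be : EQ a b u v al be -> T a b al u v.
Proof. intro h; apply (ceq_sides_typed h). Qed.
Lemma ceq_rhs_typed a b u v al be : EQ a b u v al be -> T a b be u v.
Proof. intro h; apply (ceq_sides_typed h). Qed.
End Boundaries.

(* Hook for typing facts specific to a presentation (well-typedness of its
   generating 2-cells, typing of its generators, ...); redefined for M(H). *)
Ltac ty_hook := fail.
Ltac ty_from_context := solve [eassumption | ty_hook].
Ltac ty_cell_from_context := solve
  [ ty_from_context
  | eapply ceq_lhs_typed; ty_from_context
  | eapply ceq_rhs_typed; ty_from_context ].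
Ltac ty_boundary := first
  [ eapply cell_src_typed; ty_cell_from_context
  | eapply cell_tgt_typed; ty_cell_from_context
  | eapply ceq_lhs_typed; ty_from_context
  | eapply ceq_rhs_typed; ty_from_context ].
Ltac ty := repeat first [eassumption | ty_rule | ty_boundary | ty_hook].

Section DerivedEquations.
Variables (O X Y : Type).
Variable xty : X -> O -> O -> Prop.
Variable yty : Y -> O -> O -> word O X -> word O X -> Prop.
Variable rel : O -> O -> word O X -> word O X -> cell O X Y -> cell O X Y -> Prop.
Hypothesis gen2_typed :
  forall y a b s t, yty y a b s t -> wty xty s a b /\ wty xty t a b.

Local Notation WT := (wty xty).
Local Notation T := (cty xty yty).
Local Notation EQ := (ceq xty yty rel).

Lemma vcong_l a b u v w al be be' :
  EQ a b v w be be' -> T a b al u v -> EQ a b u w (cv be al) (cv be' al).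
Proof. intros; eapply ceq_v; [apply ceq_refl; eassumption | eassumption]. Qed.
Lemma vcong_r a b u v w al al' be :
  T a b be v w -> EQ a b u v al al' -> EQ a b u w (cv be al) (cv be al').
Proof. intros; eapply ceq_v; [eassumption | apply ceq_refl; eassumption]. Qed.
Lemma hcong_l a b c f f' g g' al be be' :
  EQ b c g g' be be' -> T a b al f f' ->
  EQ a c (wcomp g f) (wcomp g' f') (ch be al) (ch be' al).
Proof. intros; eapply ceq_h; [apply ceq_refl; eassumption | eassumption]. Qed.
Lemma hcong_r a b c f f' g g' al al' be :
  T b c be g g' -> EQ a b f f' al al' ->
  EQ a c (wcomp g f) (wcomp g' f') (ch be al) (ch be al').
Proof. intros; eapply ceq_h; [eassumption | apply ceq_refl; eassumption]. Qed.

Lemma lwhisker_vcomp a b c f f' f'' g al al' :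
  WT g b c -> T a b al f f' -> T a b al' f' f'' ->
  EQ a c (wcomp g f) (wcomp g f'')
     (ch (cid g) (cv al' al)) (cv (ch (cid g) al') (ch (cid g) al)).
Proof.
  intros. eapply ceq_trans; [| eapply ceq_interchange; ty].
  eapply hcong_l; [apply ceq_sym, ceq_idl |]; ty.
Qed.

Lemma rwhisker_vcomp a b c f g g' g'' be be' :
  WT f a b -> T b c be g g' -> T b c be' g' g'' ->
  EQ a c (wcomp g f) (wcomp g'' f)
     (ch (cv be' be) (cid f)) (cv (ch be' (cid f)) (ch be (cid f))).
Proof.
  intros. eapply ceq_trans; [| eapply ceq_interchange; ty].
  eapply hcong_r; [| apply ceq_sym, ceq_idl]; ty.
Qed.

Lemma hcomp_as_whiskers a b c f f' g g' al be :
  T a b al f f' -> T b c be g g' ->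
  EQ a c (wcomp g f) (wcomp g' f')
     (ch be al) (cv (ch be (cid f')) (ch (cid g) al)).
Proof.
  intros. eapply ceq_trans; [| eapply ceq_interchange; ty].
  eapply ceq_h; apply ceq_sym; [eapply ceq_idl | eapply ceq_idr]; ty.
Qed.
End DerivedEquations.

(* Equational reasoning.  [dstep] proves an equation between two 2-cells that
   differ in a single subterm (below a common context of compositions), where
   that subterm is rewritten by one instance of a bicategory axiom or derived
   equation, in either direction, or by a hypothesis.  [calc c] is one step of a
   calculation: it rewrites the left-hand side into [c] by [dstep]. *)
Ltac axiom_rule :=
     eapply ceq_vassoc + eapply ceq_idl + eapply ceq_idr + eapply ceq_hid
   + eapply ceq_interchange + eapply lwhisker_vcomp + eapply rwhisker_vcomp
   + eapply hcomp_as_whiskers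
   + eapply ceq_a_nat + eapply ceq_l_nat + eapply ceq_r_nat
   + eapply ceq_pentagon + eapply ceq_triangle
   + eapply ceq_a_inv1 + eapply ceq_a_inv2 + eapply ceq_l_inv1
   + eapply ceq_l_inv2 + eapply ceq_r_inv1 + eapply ceq_r_inv2.
(* Hook for further one-step equations (derived lemmas, defining relations). *)
Ltac leaf_hook := fail.
Ltac leaf := first
  [ solve [apply ceq_refl; ty]
  | solve [axiom_rule; ty] | solve [apply ceq_sym; axiom_rule; ty]
  | solve [eassumption] | solve [apply ceq_sym; eassumption]
  | leaf_hook ].
Ltac dstep := match goal with
 | |- ceq _ _ _ _ _ _ _ ?x ?x => solve [apply ceq_refl; ty]
 | |- ceq _ _ _ _ _ _ _ (cv ?a ?b) (cv ?a ?c) => eapply vcong_r; [solve [ty] | dstep]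
 | |- ceq _ _ _ _ _ _ _ (cv ?b ?a) (cv ?c ?a) => eapply vcong_l; [dstep | solve [ty]]
 | |- ceq _ _ _ _ _ _ _ (ch ?a ?b) (ch ?a ?c) => eapply hcong_r; [solve [ty] | dstep]
 | |- ceq _ _ _ _ _ _ _ (ch ?b ?a) (ch ?c ?a) => eapply hcong_l; [dstep | solve [ty]]
 | _ => leaf
 end.
Tactic Notation "calc" uconstr(c) := match goal with
 | |- @ceq ?O ?X ?Y _ _ _ _ _ _ _ _ _ =>
     apply ceq_trans with (be := (c : cell O X Y)); [dstep |]
 end.

Section Invertibility.
Variables (O X Y : Type).
Variable xty : X -> O -> O -> Prop.
Variable yty : Y -> O -> O -> word O X -> word O X -> Prop.
Variable rel : O -> O -> word O X -> word O X -> cell O X Y -> cell O X Y -> Prop.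
Hypothesis gen2_typed :
  forall y a b s t, yty y a b s t -> wty xty s a b /\ wty xty t a b.

Local Notation WT := (wty xty).
Local Notation T := (cty xty yty).
Local Notation EQ := (ceq xty yty rel).

Definition inverse_pair a b u v al al' :=
  T a b al u v /\ T a b al' v u /\
  EQ a b u u (cv al' al) (cid u) /\ EQ a b v v (cv al al') (cid v).

Lemma inverse_pair_sym a b u v al al' :
  inverse_pair a b u v al al' -> inverse_pair a b v u al' al.
Proof. unfold inverse_pair; tauto. Qed.

Lemma inverse_pair_id a b u : WT u a b -> inverse_pair a b u u (cid u) (cid u).
Proof. intros; repeat split; ty; eapply ceq_idl; ty. Qed.

Lemma inverse_pair_vcomp a b u v w al al' be be' :
  inverse_pair a b u v al al' -> inverse_pair a b v w be be' ->
  inverse_pair a b u w (cv be al) (cv al' be').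
Proof.
  intros (? & ? & ? & ?) (? & ? & ? & ?); repeat split; ty.
  - calc (cv al' (cv be' (cv be al))). calc (cv al' (cv (cv be' be) al)).
    calc (cv al' (cv (cid v) al)). calc (cv al' al). dstep.
  - calc (cv be (cv al (cv al' be'))). calc (cv be (cv (cv al al') be')).
    calc (cv be (cv (cid v) be')). calc (cv be be'). dstep.
Qed.

Lemma inverse_pair_hcomp a b c f f' g g' al al' be be' :
  inverse_pair a b f f' al al' -> inverse_pair b c g g' be be' ->
  inverse_pair a c (wcomp g f) (wcomp g' f') (ch be al) (ch be' al').
Proof.
  intros (? & ? & ? & ?) (? & ? & ? & ?); repeat split; ty.
  - calc (ch (cv be' be) (cv al' al)). calc (ch (cid g) (cv al' al)).
    calc (ch (cid g) (cid f) : cell O X Y). dstep.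
  - calc (ch (cv be be') (cv al al')). calc (ch (cid g') (cv al al')).
    calc (ch (cid g') (cid f') : cell O X Y). dstep.
Qed.

Lemma inverse_pair_assoc a b c d h g f : WT f a b -> WT g b c -> WT h c d ->
  inverse_pair a d (wcomp (wcomp h g) f) (wcomp h (wcomp g f)) (ca h g f) (cai h g f).
Proof. intros; repeat split; [ty | ty | dstep | dstep]. Qed.
Lemma inverse_pair_lunit a b f : WT f a b ->
  inverse_pair a b (wcomp (wid b) f) f (cl f) (cli f).
Proof. intros; repeat split; [ty | ty | dstep | dstep]. Qed.
Lemma inverse_pair_runit a b f : WT f a b ->
  inverse_pair a b (wcomp f (wid a)) f (cr f) (cri f).
Proof. intros; repeat split; [ty | ty | dstep | dstep]. Qed.

Lemma cancel_inverse_r a b u v w A B Z Z' :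
  inverse_pair a b w u Z Z' -> T a b A u v -> T a b B u v ->
  EQ a b w v (cv A Z) (cv B Z) -> EQ a b u v A B.
Proof.
  intros (? & ? & ? & ?) ? ? ?.
  calc (cv A (cid u)). calc (cv A (cv Z Z')). calc (cv (cv A Z) Z').
  calc (cv (cv B Z) Z'). calc (cv B (cv Z Z')). calc (cv B (cid u)). dstep.
Qed.
Lemma cancel_inverse_l a b u v w A B Z Z' :
  inverse_pair a b v w Z Z' -> T a b A u v -> T a b B u v ->
  EQ a b u w (cv Z A) (cv Z B) -> EQ a b u v A B.
Proof.
  intros (? & ? & ? & ?) ? ? ?.
  calc (cv (cid v) A). calc (cv (cv Z' Z) A). calc (cv Z' (cv Z A)).
  calc (cv Z' (cv Z B)). calc (cv (cv Z' Z) B). calc (cv (cid v) B). dstep.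
Qed.

Lemma cells_invertible
  (gen2_invertible : forall y a b s t, yty y a b s t ->
     exists y', inverse_pair a b s t (cgen y) y')
  a b al u v : T a b al u v -> exists al', inverse_pair a b u v al al'.
Proof.
  induction 1.
  - eexists; apply inverse_pair_id; assumption.
  - destruct IHcty1, IHcty2; eexists; eapply inverse_pair_vcomp; eassumption.
  - destruct IHcty1, IHcty2; eexists; eapply inverse_pair_hcomp; eassumption.
  - eexists; eapply inverse_pair_assoc; eassumption.
  - eexists; eapply inverse_pair_sym, inverse_pair_assoc; eassumption.
  - eexists; apply inverse_pair_lunit; assumption.
  - eexists; apply inverse_pair_sym, inverse_pair_lunit; assumption.
  - eexists; apply inverse_pair_runit; assumption.
  - eexists; apply inverse_pair_sym, inverse_pair_runit; assumption.
  - eapply gen2_invertible; eassumption.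
Qed.

Lemma lwhisker_unit_faithful a b f f' al be :
  T a b al f f' -> T a b be f f' ->
  EQ a b (wcomp (wid b) f) (wcomp (wid b) f')
     (ch (cid (wid b)) al) (ch (cid (wid b)) be) ->
  EQ a b f f' al be.
Proof.
  intros ? ? ?. assert (WT f a b) by ty.
  eapply cancel_inverse_r; [eapply inverse_pair_lunit; eassumption | eassumption
                           | eassumption |].
  calc (cv (cl f') (ch (cid (wid b)) al)). calc (cv (cl f') (ch (cid (wid b)) be)).
  dstep.
Qed.
Lemma rwhisker_unit_faithful a b f f' al be :
  T a b al f f' -> T a b be f f' ->
  EQ a b (wcomp f (wid a)) (wcomp f' (wid a))
     (ch al (cid (wid a))) (ch be (cid (wid a))) ->
  EQ a b f f' al be.
Proof.
  intros ? ? ?. assert (WT f a b) by ty.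
  eapply cancel_inverse_r; [eapply inverse_pair_runit; eassumption | eassumption
                           | eassumption |].
  calc (cv (cr f') (ch al (cid (wid a)))). calc (cv (cr f') (ch be (cid (wid a)))).
  dstep.
Qed.

(* Kelly's lemma: l_{g f} o a_{1,g,f} = l_g |> f.  It follows from the pentagon
   and triangle axioms after whiskering with id_c on the left. *)
Lemma lunitor_assoc a b c f g : WT f a b -> WT g b c ->
  EQ a c (wcomp (wcomp (wid c) g) f) (wcomp g f)
    (cv (cl (wcomp g f)) (ca (wid c) g f)) (ch (cl g) (cid f)).
Proof.
  intros hf hg.
  apply lwhisker_unit_faithful; [ty | ty |].
  assert (hZ : inverse_pair a c
     (wcomp (wcomp (wcomp (wid c) (wid c)) g) f) (wcomp (wid c) (wcomp (wcomp (wid c) g) f))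
     (cv (ca (wid c) (wcomp (wid c) g) f) (ch (ca (wid c) (wid c) g) (cid f)))
     (cv (ch (cai (wid c) (wid c) g) (cid f)) (cai (wid c) (wcomp (wid c) g) f))).
  { eapply inverse_pair_vcomp.
    - eapply inverse_pair_hcomp; [eapply inverse_pair_id | eapply inverse_pair_assoc]; ty.
    - eapply inverse_pair_assoc; ty. }
  eapply cancel_inverse_r; [exact hZ | ty | ty |].
  (* whiskering by 1 is functorial, then the pentagon for (1, 1, g, f) *)
  calc (cv (cv (ch (cid (wid c)) (cl (wcomp g f))) (ch (cid (wid c)) (ca (wid c) g f)))
           (cv (ca (wid c) (wcomp (wid c) g) f) (ch (ca (wid c) (wid c) g) (cid f)))).
  calc (cv (ch (cid (wid c)) (cl (wcomp g f)))
           (cv (ch (cid (wid c)) (ca (wid c) g f))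
               (cv (ca (wid c) (wcomp (wid c) g) f) (ch (ca (wid c) (wid c) g) (cid f))))).
  calc (cv (ch (cid (wid c)) (cl (wcomp g f)))
           (cv (ca (wid c) (wid c) (wcomp g f)) (ca (wcomp (wid c) (wid c)) g f))).
  (* the triangle for (1, g f) *)
  calc (cv (cv (ch (cid (wid c)) (cl (wcomp g f))) (ca (wid c) (wid c) (wcomp g f)))
           (ca (wcomp (wid c) (wid c)) g f)).
  calc (cv (ch (cr (wid c)) (cid (wcomp g f))) (ca (wcomp (wid c) (wid c)) g f)).
  (* naturality of the associator in its first argument *)
  calc (cv (ch (cr (wid c)) (ch (cid g) (cid f))) (ca (wcomp (wid c) (wid c)) g f)).
  calc (cv (ca (wid c) g f) (ch (ch (cr (wid c)) (cid g)) (cid f))).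
  (* the triangle for (1, g), whiskered by f *)
  calc (cv (ca (wid c) g f) (ch (cv (ch (cid (wid c)) (cl g)) (ca (wid c) (wid c) g)) (cid f))).
  calc (cv (ca (wid c) g f)
           (cv (ch (ch (cid (wid c)) (cl g)) (cid f)) (ch (ca (wid c) (wid c) g) (cid f)))).
  (* naturality of the associator in its second argument *)
  calc (cv (cv (ca (wid c) g f) (ch (ch (cid (wid c)) (cl g)) (cid f)))
           (ch (ca (wid c) (wid c) g) (cid f))).
  calc (cv (cv (ch (cid (wid c)) (ch (cl g) (cid f))) (ca (wid c) (wcomp (wid c) g) f))
           (ch (ca (wid c) (wid c) g) (cid f))).
  dstep.
Qed.
End Invertibility.

Section Normalization.
Variables (G M : graph) (H : gmap G M).

Local Notation WT := (wty (Mxty H)).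
Local Notation T := (cty (Mxty H) (Myty H)).
Local Notation EQ := (ceq (Mxty H) (Myty H) (Mrel H)).
Local Notation FWT := (wty (Fxty G)).
Local Notation FT := (cty (Fxty G) (@Fyty G)).
Local Notation Inv := (inverse_pair (Mxty H) (Myty H) (Mrel H)).
Local Notation Phi al := (@cgen (V M) (gen1 G M) (gen2 G) (YPhi al)).
Local Notation phiC g f := (@cgen (V M) (gen1 G M) (gen2 G) (YC g f)).
Local Notation phiCi g f := (@cgen (V M) (gen1 G M) (gen2 G) (YCi g f)).
Local Notation phiU a := (@cgen (V M) (gen1 G M) (gen2 G) (YU G a)).
Local Notation phiUi a := (@cgen (V M) (gen1 G M) (gen2 G) (YUi G a)).

(* The path of edges of G traversed by a 1-cell of F(G) (read right to left). *)
Fixpoint gedges (w : FW G) : list (E G) :=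
  match w with
  | wid _ => []
  | wgen x => [x]
  | wcomp g f => gedges g ++ gedges f
  end.

Definition gen1_edges (x : gen1 G M) : list (E M) :=
  match x with
  | GE _ _ e => [e]
  | GPhi _ w => map (hE H) (gedges w)
  end.
Fixpoint edges (u : MW G M) : list (E M) :=
  match u with
  | wid _ => []
  | wgen x => gen1_edges x
  | wcomp g f => edges g ++ edges f
  end.

Fixpoint prepend (l : list (E M)) (N : MW G M) : MW G M :=
  match l with
  | [] => N
  | e :: l => wcomp (wgen (GE G M e)) (prepend l N)
  end.

Lemma prepend_app l1 l2 N : prepend (l1 ++ l2) N = prepend l1 (prepend l2 N).
Proof. induction l1; simpl; congruence. Qed.

(* Normalization 2-cells  normPhi w N : Phi(w) . N => prepend (H(path of w)) N
   and  norm u N : u . N => prepend (edges u) N, built from the inverse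
   structure cells of Phi, associators and left unitors. *)
Fixpoint normPhi (w : FW G) (N : MW G M) : MC G M :=
  match w with
  | wid a => cv (cl N) (ch (phiUi a) (cid N))
  | wgen x => cid (wcomp (wgen (GE G M (hE H x))) N)
  | wcomp g f =>
      cv (cv (normPhi g (prepend (map (hE H) (gedges f)) N))
             (cv (ch (cid (Pw H g)) (normPhi f N)) (ca (Pw H g) (Pw H f) N)))
         (ch (phiCi g f) (cid N))
  end.

Fixpoint norm (u : MW G M) (N : MW G M) : MC G M :=
  match u with
  | wid _ => cl N
  | wgen (GE _ _ e) => cid (wcomp (wgen (GE G M e)) N)
  | wgen (GPhi _ w) => normPhi w N
  | wcomp g f =>
      cv (norm g (prepend (edges f) N)) (cv (ch (cid g) (norm f N)) (ca g f N))
  end.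

Lemma edges_Pw w : edges (Pw H w) = map (hE H) (gedges w).
Proof. destruct w; reflexivity. Qed.

Lemma norm_Pw w N : norm (Pw H w) N = normPhi w N.
Proof. destruct w; reflexivity. Qed.

Lemma Pw_nonedge w : (forall x, w <> wgen x) -> Pw H w = wgen (GPhi M w).
Proof. destruct w as [| x |]; intros h; [reflexivity | | reflexivity]. now destruct (h x). Qed.

Lemma normPhi_comp g f N : normPhi (wcomp g f) N =
  cv (norm (wcomp (Pw H g) (Pw H f)) N) (ch (phiCi g f) (cid N)).
Proof. simpl normPhi. rewrite <- !norm_Pw, <- edges_Pw. reflexivity. Qed.

Lemma edges_Phi_comp g f :
  edges (Pw H (wcomp g f)) = edges (wcomp (Pw H g) (Pw H f)).
Proof. rewrite edges_Pw; cbn [edges gedges]. rewrite !edges_Pw, map_app. reflexivity. Qed.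

Lemma Pw_typed w a b : FWT w a b -> WT (Pw H w) (hV H a) (hV H b).
Proof.
  intro h. destruct w.
  - apply wty_gen, Mxty_Phi; [exact h | discriminate].
  - inversion h as [| ? ? ? hx |]; inversion hx; subst.
    apply wty_gen. unfold Pw; simpl. rewrite <- hsrc, <- htgt. apply Mxty_E.
  - apply wty_gen, Mxty_Phi; [exact h | discriminate].
Qed.

Lemma Fyty_typed (y : Empty_set) a b (s t : FW G) :
  @Fyty G y a b s t -> FWT s a b /\ FWT t a b.
Proof. destruct y. Qed.

Lemma Myty_typed y a b s t : Myty H y a b s t -> WT s a b /\ WT t a b.
Proof.
  intros h; destruct h as [a b al s t hal | | | |].
  - destruct (cell_boundary_typed Fyty_typed hal). split; apply Pw_typed; auto.
  - split; [eapply wty_comp; apply Pw_typed; eauto | apply Pw_typed; eapply wty_comp; eauto].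
  - split; [apply Pw_typed; eapply wty_comp; eauto | eapply wty_comp; apply Pw_typed; eauto].
  - split; [constructor | apply Pw_typed; constructor].
  - split; [apply Pw_typed; constructor | constructor].
Qed.

Ltac mh_typing := first
  [ exact Myty_typed | exact Fyty_typed
  | progress unfold fwty, fcty
  | match goal with
    | |- wty _ (Pw _ _) _ _ => eapply Pw_typed
    | |- cty _ _ _ _ (cgen (YC _ _)) _ _ => eapply cty_gen; eapply Myty_C
    | |- cty _ _ _ _ (cgen (YCi _ _)) _ _ => eapply cty_gen; eapply Myty_Ci
    | |- cty _ _ _ _ (cgen (YU _ _)) _ _ => eapply cty_gen; eapply Myty_U
    | |- cty _ _ _ _ (cgen (YUi _ _)) _ _ => eapply cty_gen; eapply Myty_Ui
    | |- cty _ _ _ _ (cgen (YPhi _)) _ _ => eapply cty_gen; eapply Myty_Phi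
    end ].
Ltac ty_hook ::= mh_typing.

Lemma prepend_Phi_typed w a b z N : FWT w a b -> WT N z (hV H a) ->
  WT (prepend (map (hE H) (gedges w)) N) z (hV H b).
Proof.
  intro h; revert z N; induction h as [| x a b hx | ]; intros z N hN; simpl.
  - exact hN.
  - inversion hx; subst. eapply wty_comp; [exact hN |].
    apply wty_gen. rewrite <- hsrc, <- htgt. apply Mxty_E.
  - rewrite map_app, prepend_app. eauto.
Qed.

Lemma prepend_typed u x y z N : WT u x y -> WT N z x -> WT (prepend (edges u) N) z y.
Proof.
  intro h; revert z N; induction h as [| ? ? ? hx | ]; intros z N hN; simpl.
  - exact hN.
  - inversion hx; subst; simpl.
    + eapply wty_comp; [exact hN | apply wty_gen, Mxty_E].
    + eapply prepend_Phi_typed; eassumption.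
  - rewrite prepend_app. eauto.
Qed.

Lemma normPhi_typed w : forall a b z N, FWT w a b -> WT N z (hV H a) ->
  T z (hV H b) (normPhi w N) (wcomp (Pw H w) N)
    (prepend (map (hE H) (gedges w)) N).
Proof.
  induction w as [a0 | x | g IHg f IHf]; intros a b z N h hN; inversion h; subst.
  - simpl. ty.
  - match goal with hx : Fxty _ _ _ _ |- _ => inversion hx; subst end.
    simpl. apply cty_id. eapply wty_comp; [exact hN |].
    apply wty_gen. rewrite <- hsrc, <- htgt. apply Mxty_E.
  - rewrite normPhi_comp. cbn [gedges]. rewrite map_app, prepend_app.
    cbn [norm]. rewrite !norm_Pw, edges_Pw.
    match goal with hf : wty _ f _ _, hg : wty _ g _ _ |- _ =>
      pose proof (IHf _ _ _ _ hf hN);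
      pose proof (IHg _ _ _ _ hg (prepend_Phi_typed hf hN)) end.
    ty.
Qed.

Lemma norm_typed u : forall x y z N, WT u x y -> WT N z x ->
  T z y (norm u N) (wcomp u N) (prepend (edges u) N).
Proof.
  induction u as [a0 | x0 | g IHg f IHf]; intros x y z N h hN; inversion h; subst.
  - simpl. ty.
  - match goal with hx : Mxty _ _ _ _ |- _ => inversion hx; subst end.
    + simpl. ty.
    + match goal with hw : forall x, _ <> wgen x |- _ => rewrite <- (Pw_nonedge hw) end.
      rewrite norm_Pw, edges_Pw. eapply normPhi_typed; eassumption.
  - cbn [norm edges]. rewrite prepend_app.
    match goal with hf : wty _ f _ _, hg : wty _ g _ _ |- _ =>
      pose proof (IHf _ _ _ _ hf hN);
      pose proof (IHg _ _ _ _ hg (prepend_typed hf hN)) end.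
    ty.
Qed.

Ltac ty_hook ::= first [mh_typing | eapply norm_typed | eapply prepend_typed].

Ltac mh_relation :=
     (eapply R_resp; eassumption) + eapply R_id + eapply R_v + eapply R_nat
   + eapply R_C_inv1 + eapply R_C_inv2 + eapply R_U_inv1 + eapply R_U_inv2
   + eapply R_assoc + eapply R_lunit + eapply R_runit.
Ltac mh_step := eapply lunitor_assoc + (eapply ceq_rel; [mh_relation | |]).
Ltac leaf_hook ::= first [solve [mh_step; ty] | solve [apply ceq_sym; mh_step; ty]].

Definition coherent x y u v al :=
  edges u = edges v /\
  forall z N, WT N z x ->
    EQ z y (wcomp u N) (prepend (edges u) N) (cv (norm v N) (ch al (cid N))) (norm u N).

Lemma coherent_id x y u : WT u x y -> coherent x y u u (cid u).
Proof.
  intros hu; split; [reflexivity |]; intros z N hN.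
  calc (cv (norm u N) (cid (wcomp u N))). dstep.
Qed.

Lemma coherent_ext x y u v al be :
  coherent x y u v al -> EQ x y u v al be -> coherent x y u v be.
Proof.
  intros [He Hn] e; split; [exact He |]; intros z N hN.
  specialize (Hn z N hN). rewrite He in Hn |- *.
  calc (cv (norm v N) (ch al (cid N))). exact Hn.
Qed.

Lemma coherent_vcomp x y u v w al be : T x y al u v -> T x y be v w ->
  coherent x y u v al -> coherent x y v w be -> coherent x y u w (cv be al).
Proof.
  intros ha hb [E1 Ha] [E2 Hb]. split; [congruence |]. intros z N hN.
  specialize (Ha z N hN); specialize (Hb z N hN).
  rewrite E1 in Ha |- *. rewrite E2 in Ha, Hb |- *.
  calc (cv (norm w N) (cv (ch be (cid N)) (ch al (cid N)))).
  calc (cv (cv (norm w N) (ch be (cid N))) (ch al (cid N))).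
  calc (cv (norm v N) (ch al (cid N))).
  exact Ha.
Qed.

Lemma coherent_inverse x y u v al al' :
  Inv x y u v al al' -> coherent x y u v al -> coherent x y v u al'.
Proof.
  intros (? & ? & ? & ?) [E Hn]. split; [congruence |]. intros z N hN.
  specialize (Hn z N hN). rewrite E in Hn.
  calc (cv (cv (norm v N) (ch al (cid N))) (ch al' (cid N))).
  calc (cv (norm v N) (cv (ch al (cid N)) (ch al' (cid N)))).
  calc (cv (norm v N) (ch (cv al al') (cid N))).
  calc (cv (norm v N) (ch (cid v) (cid N))).
  calc (cv (norm v N) (cid (wcomp v N))).
  dstep.
Qed.

Lemma coherent_cancel x y u v w al al' ga be :
  Inv x y u w al al' -> T x y ga u v -> T x y be w v ->
  EQ x y u v (cv be al) ga -> coherent x y u w al -> coherent x y u v ga ->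
  coherent x y w v be.
Proof.
  intros hi hga hbe e hal hgac.
  pose proof (coherent_inverse hi hal) as hal'.
  destruct hi as (? & ? & ? & ?).
  apply coherent_ext with (al := cv ga al'); [eapply coherent_vcomp; eassumption |].
  calc (cv (cv be al) al'). calc (cv be (cv al al')). calc (cv be (cid w)). dstep.
Qed.

(* For be * al, the associator moves (be * al) |> N to be * (al |> N), which
   splits into g' <| (al |> N) and be |> Nf by interchange. *)
Lemma coherent_hcomp a b c f f' g g' al be : T a b al f f' -> T b c be g g' ->
  coherent a b f f' al -> coherent b c g g' be ->
  coherent a c (wcomp g f) (wcomp g' f') (ch be al).
Proof.
  intros ha hb [Ef Hf] [Eg Hg]. split; [simpl; congruence |].
  intros z N hN. cbn [norm edges]. rewrite prepend_app, <- Ef.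
  assert (WT f a b) by ty. assert (WT f' a b) by ty.
  assert (WT g b c) by ty. assert (WT g' b c) by ty.
  specialize (Hf z N hN). specialize (Hg z (prepend (edges f) N) ltac:(ty)).
  assert (T z b (norm f' N) (wcomp f' N) (prepend (edges f) N))
    by (rewrite Ef; ty).
  assert (T z c (norm g' (prepend (edges f) N)) (wcomp g' (prepend (edges f) N))
            (prepend (edges g) (prepend (edges f) N))) by (rewrite Eg; ty).
  set (Nf := prepend (edges f) N) in *.
  calc (cv (norm g' Nf) (cv (cv (ch (cid g') (norm f' N)) (ca g' f' N))
                            (ch (ch be al) (cid N)))).
  calc (cv (norm g' Nf) (cv (ch (cid g') (norm f' N))
                            (cv (ca g' f' N) (ch (ch be al) (cid N))))).
  calc (cv (norm g' Nf) (cv (ch (cid g') (norm f' N))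
                            (cv (ch be (ch al (cid N))) (ca g f N)))).
  calc (cv (norm g' Nf) (cv (cv (ch (cid g') (norm f' N)) (ch be (ch al (cid N))))
                            (ca g f N))).
  calc (cv (norm g' Nf) (cv (ch (cv (cid g') be) (cv (norm f' N) (ch al (cid N))))
                            (ca g f N))).
  calc (cv (norm g' Nf) (cv (ch be (cv (norm f' N) (ch al (cid N)))) (ca g f N))).
  calc (cv (norm g' Nf) (cv (ch be (norm f N)) (ca g f N))).
  calc (cv (norm g' Nf) (cv (cv (ch be (cid Nf)) (ch (cid g) (norm f N))) (ca g f N))).
  calc (cv (norm g' Nf) (cv (ch be (cid Nf)) (cv (ch (cid g) (norm f N)) (ca g f N)))).
  calc (cv (cv (norm g' Nf) (ch be (cid Nf))) (cv (ch (cid g) (norm f N)) (ca g f N))).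
  dstep.
Qed.

(* The structure cells of a bicategory are coherent: the associator by the
   pentagon, the left unitor by Kelly's lemma, the right unitor by the triangle. *)
Lemma coherent_assoc a b c d h g f : WT f a b -> WT g b c -> WT h c d ->
  coherent a d (wcomp (wcomp h g) f) (wcomp h (wcomp g f)) (ca h g f).
Proof.
  intros hf hg hh. split; [simpl; rewrite app_assoc; reflexivity |].
  intros z N hN. cbn [norm edges]. rewrite !prepend_app.
  assert (WT (prepend (edges f) N) z b) by ty.
  assert (WT (prepend (edges g) (prepend (edges f) N)) z c) by ty.
  set (Nf := prepend (edges f) N) in *. set (Ngf := prepend (edges g) Nf) in *.
  set (nf := norm f N). set (ng := norm g Nf).
  (* distribute h <| _ over the normalization of g . f and reassociate *)
  calc (cv (norm h Ngf)
      (cv (cv (ch (cid h) (cv ng (cv (ch (cid g) nf) (ca g f N)))) (ca h (wcomp g f) N))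
          (ch (ca h g f) (cid N)))).
  calc (cv (norm h Ngf)
      (cv (ch (cid h) (cv ng (cv (ch (cid g) nf) (ca g f N))))
          (cv (ca h (wcomp g f) N) (ch (ca h g f) (cid N))))).
  calc (cv (norm h Ngf)
      (cv (cv (ch (cid h) ng) (ch (cid h) (cv (ch (cid g) nf) (ca g f N))))
          (cv (ca h (wcomp g f) N) (ch (ca h g f) (cid N))))).
  calc (cv (norm h Ngf)
      (cv (cv (ch (cid h) ng)
              (cv (ch (cid h) (ch (cid g) nf)) (ch (cid h) (ca g f N))))
          (cv (ca h (wcomp g f) N) (ch (ca h g f) (cid N))))).
  calc (cv (norm h Ngf)
      (cv (ch (cid h) ng)
          (cv (cv (ch (cid h) (ch (cid g) nf)) (ch (cid h) (ca g f N)))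
              (cv (ca h (wcomp g f) N) (ch (ca h g f) (cid N)))))).
  calc (cv (norm h Ngf)
      (cv (ch (cid h) ng)
          (cv (ch (cid h) (ch (cid g) nf))
              (cv (ch (cid h) (ca g f N))
                  (cv (ca h (wcomp g f) N) (ch (ca h g f) (cid N))))))).
  (* the pentagon *)
  calc (cv (norm h Ngf)
      (cv (ch (cid h) ng)
          (cv (ch (cid h) (ch (cid g) nf))
              (cv (ca h g (wcomp f N)) (ca (wcomp h g) f N))))).
  calc (cv (norm h Ngf)
      (cv (ch (cid h) ng)
          (cv (cv (ch (cid h) (ch (cid g) nf)) (ca h g (wcomp f N)))
              (ca (wcomp h g) f N)))).
  (* naturality of the associator *)
  calc (cv (norm h Ngf)
      (cv (ch (cid h) ng)
          (cv (cv (ca h g Nf) (ch (ch (cid h) (cid g)) nf)) (ca (wcomp h g) f N)))).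
  calc (cv (norm h Ngf)
      (cv (ch (cid h) ng)
          (cv (cv (ca h g Nf) (ch (cid (wcomp h g)) nf)) (ca (wcomp h g) f N)))).
  calc (cv (norm h Ngf)
      (cv (ch (cid h) ng)
          (cv (ca h g Nf) (cv (ch (cid (wcomp h g)) nf) (ca (wcomp h g) f N))))).
  calc (cv (norm h Ngf)
      (cv (cv (ch (cid h) ng) (ca h g Nf))
          (cv (ch (cid (wcomp h g)) nf) (ca (wcomp h g) f N)))).
  dstep.
Qed.

Lemma coherent_lunit a b f : WT f a b -> coherent a b (wcomp (wid b) f) f (cl f).
Proof.
  intros hf. split; [reflexivity |]. intros z N hN. cbn [norm edges].
  assert (WT (prepend (edges f) N) z b) by ty.
  (* Kelly's lemma, then naturality of the left unitor *)
  calc (cv (norm f N) (cv (cl (wcomp f N)) (ca (wid b) f N))).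
  calc (cv (cv (norm f N) (cl (wcomp f N))) (ca (wid b) f N)).
  calc (cv (cv (cl (prepend (edges f) N)) (ch (cid (wid b)) (norm f N)))
           (ca (wid b) f N)).
  dstep.
Qed.

Lemma coherent_runit a b f : WT f a b -> coherent a b (wcomp f (wid a)) f (cr f).
Proof.
  intros hf. split; [simpl; rewrite app_nil_r; reflexivity |].
  (* the triangle axiom *)
  intros z N hN. cbn [norm edges prepend]. rewrite app_nil_r. dstep.
Qed.

(* The structure cells of Phi: phi^{-1}_{g,f} and phi^{-1}_a are coherent by
   the very definition of [normPhi]; phi_{g,f} and phi_a are their inverses. *)
Lemma coherent_compositor_inv a b c g f : FWT f a b -> FWT g b c ->
  coherent (hV H a) (hV H c) (Pw H (wcomp g f)) (wcomp (Pw H g) (Pw H f))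
    (phiCi g f).
Proof.
  intros hf hg. split; [apply edges_Phi_comp |]. intros z N hN.
  rewrite edges_Phi_comp, norm_Pw, normPhi_comp. apply ceq_refl. ty.
Qed.

Lemma coherent_unit_inv a :
  coherent (hV H a) (hV H a) (Pw H (wid a)) (wid (hV H a)) (phiUi a).
Proof. split; [reflexivity |]. intros z N hN. apply ceq_refl. ty. Qed.

Lemma inverse_pair_compositor a b c g f : FWT f a b -> FWT g b c ->
  Inv (hV H a) (hV H c) (wcomp (Pw H g) (Pw H f)) (Pw H (wcomp g f))
    (phiC g f) (phiCi g f).
Proof. intros; repeat split; [ty | ty | dstep | dstep]. Qed.

Lemma inverse_pair_unit a :
  Inv (hV H a) (hV H a) (wid (hV H a)) (Pw H (wid a)) (phiU a) (phiUi a).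
Proof. repeat split; [ty | ty | dstep | dstep]. Qed.

Lemma coherent_compositor a b c g f : FWT f a b -> FWT g b c ->
  coherent (hV H a) (hV H c) (wcomp (Pw H g) (Pw H f)) (Pw H (wcomp g f))
    (phiC g f).
Proof.
  intros hf hg. eapply coherent_inverse.
  - apply inverse_pair_sym, (inverse_pair_compositor hf hg).
  - apply (coherent_compositor_inv hf hg).
Qed.

Lemma coherent_unit a :
  coherent (hV H a) (hV H a) (wid (hV H a)) (Pw H (wid a)) (phiU a).
Proof.
  eapply coherent_inverse; [apply inverse_pair_sym, inverse_pair_unit |].
  apply coherent_unit_inv.
Qed.

Ltac inverse_by_closure := repeat first [ solve [ty] | match goal with
 | |- inverse_pair _ _ _ _ _ _ _ (cid _) _ => eapply inverse_pair_id
 | |- inverse_pair _ _ _ _ _ _ _ (cv _ _) _ => eapply inverse_pair_vcomp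
 | |- inverse_pair _ _ _ _ _ _ _ (ch _ _) _ => eapply inverse_pair_hcomp
 | |- inverse_pair _ _ _ _ _ _ _ (cgen (YC _ _)) _ => eapply inverse_pair_compositor
 | |- inverse_pair _ _ _ _ _ _ _ (cgen (YU _ _)) _ => eapply inverse_pair_unit
 end ].
Ltac coherent_by_closure := repeat first [ solve [ty] | eassumption | match goal with
 | |- coherent _ _ _ _ (cid _) => eapply coherent_id
 | |- coherent _ _ _ _ (cv _ _) => eapply coherent_vcomp
 | |- coherent _ _ _ _ (ch _ _) => eapply coherent_hcomp
 | |- coherent _ _ _ _ (ca _ _ _) => eapply coherent_assoc
 | |- coherent _ _ _ _ (cl _) => eapply coherent_lunit
 | |- coherent _ _ _ _ (cr _) => eapply coherent_runit
 | |- coherent _ _ _ _ (cai _ _ _) => eapply coherent_inverse; [eapply inverse_pair_assoc |]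
 | |- coherent _ _ _ _ (cli _) => eapply coherent_inverse; [eapply inverse_pair_lunit |]
 | |- coherent _ _ _ _ (cri _) => eapply coherent_inverse; [eapply inverse_pair_runit |]
 | |- coherent _ _ _ _ (cgen (YC _ _)) => eapply coherent_compositor
 | |- coherent _ _ _ _ (cgen (YCi _ _)) => eapply coherent_compositor_inv
 | |- coherent _ _ _ _ (cgen (YU _ _)) => eapply coherent_unit
 | |- coherent _ _ _ _ (cgen (YUi _ _)) => eapply coherent_unit_inv
 end ].

Lemma inverse_pair_Phi a b s t al al' :
  inverse_pair (Fxty G) (@Fyty G) (@Frel G) a b s t al al' ->
  Inv (hV H a) (hV H b) (Pw H s) (Pw H t) (Phi al) (Phi al').
Proof.
  intros (? & ? & ? & ?). repeat split; [ty | ty | |].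
  - calc (Phi (cv al' al)). calc (Phi (cid s)). dstep.
  - calc (Phi (cv al al')). calc (Phi (cid t)). dstep.
Qed.

(* In each case a pseudofunctor axiom of M(H) reads
   Phi(c) o al = ga, where al is an invertible composite of structure cells of
   Phi and ga is built from cells already known to be coherent; conclude by
   [coherent_cancel]. *)
Lemma coherent_Phi_assoc a b c d h g f : FWT f a b -> FWT g b c -> FWT h c d ->
  coherent (hV H a) (hV H d) (Pw H (wcomp (wcomp h g) f))
    (Pw H (wcomp h (wcomp g f))) (Phi (ca h g f)).
Proof.
  intros hf hg hh.
  apply coherent_cancel with (u := wcomp (wcomp (Pw H h) (Pw H g)) (Pw H f))
    (al := cv (phiC (wcomp h g) f) (ch (phiC h g) (cid (Pw H f))))
    (al' := cv (ch (phiCi h g) (cid (Pw H f))) (phiCi (wcomp h g) f))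
    (ga := cv (phiC h (wcomp g f))
              (cv (ch (cid (Pw H h)) (phiC g f)) (ca (Pw H h) (Pw H g) (Pw H f))));
    [inverse_by_closure | ty | ty | dstep | coherent_by_closure | coherent_by_closure].
Qed.

Lemma coherent_Phi_lunit a b f : FWT f a b ->
  coherent (hV H a) (hV H b) (Pw H (wcomp (wid b) f)) (Pw H f) (Phi (cl f)).
Proof.
  intros hf.
  apply coherent_cancel with (u := wcomp (wid (hV H b)) (Pw H f))
    (al := cv (phiC (wid b) f) (ch (phiU b) (cid (Pw H f))))
    (al' := cv (ch (phiUi b) (cid (Pw H f))) (phiCi (wid b) f))
    (ga := cl (Pw H f));
    [inverse_by_closure | ty | ty | dstep | coherent_by_closure | coherent_by_closure].
Qed.

Lemma coherent_Phi_runit a b f : FWT f a b ->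
  coherent (hV H a) (hV H b) (Pw H (wcomp f (wid a))) (Pw H f) (Phi (cr f)).
Proof.
  intros hf.
  apply coherent_cancel with (u := wcomp (Pw H f) (wid (hV H a)))
    (al := cv (phiC f (wid a)) (ch (cid (Pw H f)) (phiU a)))
    (al' := cv (ch (cid (Pw H f)) (phiUi a)) (phiCi f (wid a)))
    (ga := cr (Pw H f));
    [inverse_by_closure | ty | ty | dstep | coherent_by_closure | coherent_by_closure].
Qed.

Lemma coherent_Phi_hcomp a b c f f' g g' al be : FT a b al f f' -> FT b c be g g' ->
  coherent (hV H a) (hV H b) (Pw H f) (Pw H f') (Phi al) ->
  coherent (hV H b) (hV H c) (Pw H g) (Pw H g') (Phi be) ->
  coherent (hV H a) (hV H c) (Pw H (wcomp g f)) (Pw H (wcomp g' f')) (Phi (ch be al)).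
Proof.
  intros ha hb ? ?.
  assert (FWT f a b) by ty. assert (FWT f' a b) by ty.
  assert (FWT g b c) by ty. assert (FWT g' b c) by ty.
  apply coherent_cancel with (u := wcomp (Pw H g) (Pw H f))
    (al := phiC g f) (al' := phiCi g f)
    (ga := cv (phiC g' f') (ch (Phi be) (Phi al)));
    [inverse_by_closure | ty | ty | dstep | coherent_by_closure | coherent_by_closure].
Qed.

Lemma coherent_Phi a b al s t :
  FT a b al s t -> coherent (hV H a) (hV H b) (Pw H s) (Pw H t) (Phi al).
Proof.
  induction 1.
  - eapply coherent_ext; [eapply coherent_id | dstep]; ty.
  - eapply coherent_ext with (al := cv (Phi be) (Phi al)); [| dstep].
    eapply coherent_vcomp; [ty | ty | exact IHcty1 | exact IHcty2].
  - eapply coherent_Phi_hcomp; eassumption.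
  - eapply coherent_Phi_assoc; eassumption.
  - eapply coherent_inverse; [eapply inverse_pair_Phi, inverse_pair_assoc; ty |].
    eapply coherent_Phi_assoc; eassumption.
  - eapply coherent_Phi_lunit; eassumption.
  - eapply coherent_inverse; [eapply inverse_pair_Phi, inverse_pair_lunit; ty |].
    eapply coherent_Phi_lunit; eassumption.
  - eapply coherent_Phi_runit; eassumption.
  - eapply coherent_inverse; [eapply inverse_pair_Phi, inverse_pair_runit; ty |].
    eapply coherent_Phi_runit; eassumption.
  - destruct y.
Qed.

Lemma cells_coherent x y al u v : T x y al u v -> coherent x y u v al.
Proof.
  induction 1 as [| | | | | | | | | ? ? y ? ? hy]; [coherent_by_closure .. |].
  destruct hy; [apply coherent_Phi; assumption | coherent_by_closure ..].
Qed.

Lemma gen2_invertible y a b s t :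
  Myty H y a b s t -> exists y', Inv a b s t (cgen y) y'.
Proof.
  intros h; destruct h as [a b al s t hal | | | |].
  - destruct (cells_invertible (rel := @Frel G) Fyty_typed
                 (fun y => match y with end) hal) as [al' hi].
    eexists; apply inverse_pair_Phi, hi.
  - eexists; eapply inverse_pair_compositor; eassumption.
  - eexists; eapply inverse_pair_sym, inverse_pair_compositor; eassumption.
  - eexists; apply inverse_pair_unit.
  - eexists; apply inverse_pair_sym, inverse_pair_unit.
Qed.

(* Parallel 2-cells are equal: by coherence at N = id_x both al |> id and
   be |> id equal (norm v id)^-1 o norm u id. *)
Lemma parallel_cells_equal x y u v al be :
  T x y al u v -> T x y be u v -> EQ x y u v al be.
Proof.
  intros ha hb.
  destruct (cells_coherent ha) as [Hedges Ha].
  destruct (cells_coherent hb) as [_ Hb].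
  assert (hx : WT (wid x) x x) by constructor.
  specialize (Ha x (wid x) hx). specialize (Hb x (wid x) hx).
  assert (T x y (norm v (wid x)) (wcomp v (wid x)) (prepend (edges u) (wid x)))
    as hnorm by (rewrite Hedges; ty).
  destruct (cells_invertible Myty_typed gen2_invertible hnorm) as [norm' hi].
  apply (rwhisker_unit_faithful Myty_typed ha hb).
  eapply cancel_inverse_l; [exact hi | ty | ty |].
  calc (norm u (wid x)). dstep.
Qed.
End Normalization.

Theorem mainTheorem11 (G M : graph) (H : gmap G M) (x y : V M) :
  Mhom_thin H x y.
Proof.
  intros u v al be ha hb.
  exact (parallel_cells_equal ha hb).
Qed.
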